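(* Let $\mathbf t:\mathcal D\to\mathcal T$ be a refinement system, $c:A\to B$ in $\mathcal T$, and $\phi$ a presheaf on $A^{+}$. Then $(c^{-})^*(\phi^{\perp_A})\cong\big((c^{+})_!\phi\big)^{\perp_B}$ as presheaves on $B^{-}$.
   Context: A refinement system is a functor $\mathbf{t}:\mathcal{D}\to\mathcal{T}$; composition is diagrammatic. Write $P\sqsubset A$ if $\mathbf t(P)=A$; a derivation of $P\Rightarrow_cQ$ is a morphism $\alpha:P\to Q$ with $\mathbf t(\alpha)=c$. For $B\in\mathcal T$: $B^{+}$ has objects $(P,c)$, $P\sqsubset X$, $c:X\to B$, morphisms $(P_1,c_1)\to(P_2,c_2)$ the derivations of $P_1\Rightarrow_eP_2$ with $c_1=e;c_2$; $B^{-}$ is the opposite of the category with objects $(d,R)$, $d:B\to Y$, $R\sqsubset Y$, morphisms $(d_1,R_1)\to(d_2,R_2)$ the derivations of $R_1\Rightarrow_eR_2$ with $d_1;e=d_2$. For $c:A\to B$: $c^{+}:A^{+}\to B^{+}$, $(P,e)\mapsto(P,e;c)$, and $c^{-}:B^{-}\to A^{-}$, $(d,R)\mapsto(c;d,R)$, both identity on derivations. $\mathrm{Jdg}(\mathbf t)$ has objects $(P,c,R)$ ($P\sqsubset X$, $c:X\to Y$, $R\sqsubset Y$) and morphisms $(P_1,c_1,R_1)\to(P_2,c_2,R_2)$ pairs of derivations $\beta$ of $P_1\Rightarrow_eP_2$, $\gamma$ of $R_2\Rightarrow_{e'}R_1$ with $c_1=e;c_2;e'$; $\mathrm{Der}:\mathrm{Jdg}(\mathbf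 t)^{op}\to\mathbf{Set}$ sends $(P,c,R)$ to the set of derivations of $P\Rightarrow_cR$ and $(\beta,\gamma)$ to $\alpha\mapsto\beta;\alpha;\gamma$. Bracket $\langle-\mid-\rangle_B:B^{+}\times B^{-}\to\mathrm{Jdg}(\mathbf t)$: $((P,c),(d,R))\mapsto(P,c;d,R)$, and on morphisms $(\beta,\gamma)\mapsto(\beta,\gamma)$. For a presheaf $\phi$ on $B^{+}$, $\phi^{\perp_B}$ is the presheaf on $B^{-}$ with $\phi^{\perp_B}(y)=$ the set of natural transformations $\phi\Rightarrow\mathrm{Der}(\langle-\mid y\rangle_B)$. For a functor $F:\mathcal X\to\mathcal Y$ and presheaves $\psi$ on $\mathcal Y$, $\chi$ on $\mathcal X$: $F^*\psi=\psi\circ F^{op}$ and $F_!\chi(y)=\int^{x}\mathcal Y(y,Fx)\times\chi(x)$. *)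

From Stdlib Require Import ProofIrrelevance FunctionalExtensionality
  PropExtensionality Relations.

Set Implicit Arguments.
Unset Strict Implicit.

(* ---------- Categories (composition is diagrammatic: f ;; g = "f then g") *)
Record Category : Type := {
  Ob :> Type;
  Hom : Ob -> Ob -> Type;
  idm : forall a : Ob, Hom a a;
  comp : forall a b c : Ob, Hom a b -> Hom b c -> Hom a c;
  comp_idl : forall (a b : Ob) (f : Hom a b), comp (idm a) f = f;
  comp_idr : forall (a b : Ob) (f : Hom a b), comp f (idm b) = f;
  comp_assoc : forall (a b c d : Ob) (f : Hom a b) (g : Hom b c) (h : Hom c d),
      comp (comp f g) h = comp f (comp g h)
}.
Arguments Hom {_} _ _.
Arguments idm {_} _.
Arguments comp {_ _ _ _} _ _.
Arguments comp_idl {_ _ _} _.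
Arguments comp_idr {_ _ _} _.
Arguments comp_assoc {_ _ _ _ _} _ _ _.
Notation "f ;; g" := (comp f g) (at level 40, left associativity).

Record Functor (C D : Category) : Type := {
  fobj :> Ob C -> Ob D;
  fmap : forall a b : Ob C, Hom a b -> Hom (fobj a) (fobj b);
  fmap_id : forall a : Ob C, fmap (idm a) = idm (fobj a);
  fmap_comp : forall (a b c : Ob C) (f : Hom a b) (g : Hom b c),
      fmap (f ;; g) = fmap f ;; fmap g
}.
Arguments fmap {_ _} _ {_ _} _.
Arguments fmap_id {_ _} _ _.
Arguments fmap_comp {_ _} _ {_ _ _} _ _.

Lemma sig_ext (A : Type) (P : A -> Prop) (x y : sig P) :
  proj1_sig x = proj1_sig y -> x = y.
Proof. destruct x, y; simpl; intros ->; f_equal; apply proof_irrelevance. Qed.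

Definition Op (C : Category) : Category :=
  {| Ob := Ob C;
     Hom := fun a b => @Hom C b a;
     idm := fun a => idm a;
     comp := fun a b c f g => g ;; f;
     comp_idl := fun a b f => comp_idr f;
     comp_idr := fun a b f => comp_idl f;
     comp_assoc := fun a b c d f g h => eq_sym (comp_assoc h g f) |}.

Definition OpF (C D : Category) (F : Functor C D) : Functor (Op C) (Op D) :=
  @Build_Functor (Op C) (Op D) (fun a => F a) (fun a b f => fmap F f)
     (fun a => fmap_id F a) (fun a b c f g => @fmap_comp C D F c b a g f).

Definition Prod (C D : Category) : Category.
Proof.
  refine {| Ob := (Ob C * Ob D)%type;
            Hom := fun x y => (Hom (fst x) (fst y) * Hom (snd x) (snd y))%type;
            idm := fun x => (idm (fst x), idm (snd x));
            comp := fun x y z f g => (fst f ;; fst g, snd f ;; snd g) |}.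
  - intros a b [f g]; simpl; rewrite !comp_idl; reflexivity.
  - intros a b [f g]; simpl; rewrite !comp_idr; reflexivity.
  - intros a b c d [f1 f2] [g1 g2] [h1 h2]; simpl; rewrite !comp_assoc; reflexivity.
Defined.

Record Presheaf (C : Category) : Type := {
  pobj :> Ob C -> Type;
  pmap : forall a b : Ob C, Hom a b -> pobj b -> pobj a;
  pmap_id : forall (a : Ob C) (x : pobj a), pmap (idm a) x = x;
  pmap_comp : forall (a b c : Ob C) (f : Hom a b) (g : Hom b c) (x : pobj c),
      pmap (f ;; g) x = pmap f (pmap g x)
}.
Arguments pmap {_} _ {_ _} _ _.
Arguments pmap_id {_} _ {_} _.
Arguments pmap_comp {_} _ {_ _ _} _ _ _.

Record NatTrans (C : Category) (F G : Presheaf C) : Type := {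
  ntc :> forall a : Ob C, F a -> G a;
  nt_nat : forall (a b : Ob C) (f : Hom a b) (x : F b),
      ntc (pmap F f x) = pmap G f (ntc x)
}.

Arguments nt_nat {_ _ _} _ {_ _} _ _.

Lemma natt_ext (C : Category) (F G : Presheaf C) (e1 e2 : NatTrans F G) :
  (forall a x, e1 a x = e2 a x) -> e1 = e2.
Proof.
  destruct e1 as [n1 p1], e2 as [n2 p2]; simpl; intro H.
  assert (n1 = n2) as ->.
  { apply functional_extensionality_dep; intro a;
    apply functional_extensionality; intro x; apply H. }
  f_equal; apply proof_irrelevance.
Qed.

Definition PshIso (C : Category) (F G : Presheaf C) : Prop :=
  exists (eta : NatTrans F G) (theta : NatTrans G F),
    (forall a x, theta a (eta a x) = x) /\ (forall a x, eta a (theta a x) = x).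

Definition Pull (C X : Category) (F : Functor C X) (psi : Presheaf X) : Presheaf C.
Proof.
  refine {| pobj := fun a => psi (F a);
            pmap := fun a b f x => pmap psi (fmap F f) x |}.
  - intros a x; simpl; rewrite fmap_id; apply pmap_id.
  - intros a b c f g x; simpl; rewrite fmap_comp; apply pmap_comp.
Defined.

(* left Kan extension F_! chi (y) = coend^x Y(y, F x) x chi(x),
   realised as the quotient of the sum by the equivalence relation generated
   by (x, f, chi(u) a) ~ (x', f ;; F u, a) for u : x -> x'. *)
Section LKan.
Variables (X Y : Category) (F : Functor X Y) (chi : Presheaf X).

Definition Elt (y : Ob Y) := {x : Ob X & (Hom y (F x) * chi x)%type}.

Inductive cstep (y : Ob Y) : Elt y -> Elt y -> Prop :=
| cstep_intro : forall (x x' : Ob X) (u : Hom x x') (f : Hom y (F x)) (a : chi x'),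
    cstep (existT _ x (f, pmap chi u a)) (existT _ x' (f ;; fmap F u, a)).

Definition ceq (y : Ob Y) := clos_refl_sym_trans (Elt y) (@cstep y).
Arguments ceq : clear implicits.

Definition Coend (y : Ob Y) := {S : Elt y -> Prop | exists s, S = ceq y s}.

Definition emap (y' y : Ob Y) (g : Hom y' y) (s : Elt y) : Elt y' :=
  existT _ (projT1 s) (g ;; fst (projT2 s), snd (projT2 s)).

Lemma emap_resp (y' y : Ob Y) (g : Hom y' y) (s1 s2 : Elt y) :
  ceq y s1 s2 -> ceq y' (emap g s1) (emap g s2).
Proof.
  induction 1.
  - destruct H; apply rst_step; unfold emap; simpl.
    rewrite <- comp_assoc; constructor.
  - apply rst_refl.
  - apply rst_sym; assumption.
  - eapply rst_trans; eassumption.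
Qed.

Lemma emap_id (y : Ob Y) (s : Elt y) : emap (idm y) s = s.
Proof. destruct s as [x [f a]]; unfold emap; simpl; rewrite comp_idl; reflexivity. Qed.

Lemma emap_comp (y'' y' y : Ob Y) (g1 : Hom y'' y') (g2 : Hom y' y) (s : Elt y) :
  emap (g1 ;; g2) s = emap g1 (emap g2 s).
Proof. destruct s as [x [f a]]; unfold emap; simpl; rewrite comp_assoc; reflexivity. Qed.

Definition cpmap_pred (y' y : Ob Y) (g : Hom y' y) (Q : Coend y) : Elt y' -> Prop :=
  fun s' => exists s, proj1_sig Q s /\ ceq y' (emap g s) s'.

Lemma cpmap_pf (y' y : Ob Y) (g : Hom y' y) (Q : Coend y) :
  exists s0, cpmap_pred g Q = ceq y' s0.
Proof.
  destruct Q as [S [s0 ->]]; exists (emap g s0); unfold cpmap_pred; simpl.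
  apply functional_extensionality; intro s'; apply propositional_extensionality; split.
  - intros [s [H1 H2]]; eapply rst_trans; [apply emap_resp; exact H1 | exact H2].
  - intro H; exists s0; split; [apply rst_refl | exact H].
Qed.

Definition cpmap (y' y : Ob Y) (g : Hom y' y) (Q : Coend y) : Coend y' :=
  exist _ (cpmap_pred g Q) (cpmap_pf g Q).

Definition LKan : Presheaf Y.
Proof.
  refine {| pobj := Coend; pmap := cpmap |}.
  - intros y Q; apply sig_ext; simpl; unfold cpmap_pred.
    destruct Q as [S [s0 ->]]; simpl.
    apply functional_extensionality; intro s'; apply propositional_extensionality; split.
    + intros [s [H1 H2]]; rewrite emap_id in H2; eapply rst_trans; eassumption.
    + intro H; exists s'; split; [exact H | rewrite emap_id; apply rst_refl].
  - intros a b c f g Q; apply sig_ext; simpl; unfold cpmap_pred; simpl.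
    apply functional_extensionality; intro s'; apply propositional_extensionality; split.
    + intros [s [H1 H2]]; exists (emap g s); split.
      * exists s; split; [exact H1 | apply rst_refl].
      * rewrite <- emap_comp; exact H2.
    + intros [s1 [[s [H1 H2]] H3]]; exists s; split; [exact H1|].
      rewrite emap_comp; eapply rst_trans; [apply emap_resp; exact H2 | exact H3].
Defined.

End LKan.
Arguments LKan {X Y} F chi.

Section Refinement.
Variables (D T : Category) (t : Functor D T).

Definition PlusOb (B : Ob T) := {P : Ob D & Hom (t P) B}.
Definition PlusHom (B : Ob T) (x y : PlusOb B) :=
  {a : Hom (projT1 x) (projT1 y) | projT2 x = fmap t a ;; projT2 y}.

Lemma plus_id_pf (B : Ob T) (x : PlusOb B) :
  projT2 x = fmap t (idm (projT1 x)) ;; projT2 x.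
Proof. rewrite fmap_id, comp_idl; reflexivity. Qed.

Lemma plus_comp_pf (B : Ob T) (x y z : PlusOb B) (f : PlusHom x y) (g : PlusHom y z) :
  projT2 x = fmap t (proj1_sig f ;; proj1_sig g) ;; projT2 z.
Proof.
  destruct f as [f Hf], g as [g Hg]; simpl.
  rewrite Hf, Hg, fmap_comp, comp_assoc; reflexivity.
Qed.

Definition Plus (B : Ob T) : Category.
Proof.
  refine {| Ob := PlusOb B; Hom := @PlusHom B;
            idm := fun x => exist _ (idm (projT1 x)) (plus_id_pf x);
            comp := fun x y z f g => exist _ (proj1_sig f ;; proj1_sig g) (plus_comp_pf f g) |}.
  - intros; apply sig_ext; apply comp_idl.
  - intros; apply sig_ext; apply comp_idr.
  - intros; apply sig_ext; apply comp_assoc.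
Defined.

Definition MOb (B : Ob T) := {R : Ob D & Hom B (t R)}.
Definition MHom (B : Ob T) (x y : MOb B) :=
  {a : Hom (projT1 x) (projT1 y) | projT2 x ;; fmap t a = projT2 y}.

Lemma m_id_pf (B : Ob T) (x : MOb B) :
  projT2 x ;; fmap t (idm (projT1 x)) = projT2 x.
Proof. rewrite fmap_id, comp_idr; reflexivity. Qed.

Lemma m_comp_pf (B : Ob T) (x y z : MOb B) (f : MHom x y) (g : MHom y z) :
  projT2 x ;; fmap t (proj1_sig f ;; proj1_sig g) = projT2 z.
Proof.
  destruct f as [f Hf], g as [g Hg]; simpl.
  rewrite fmap_comp, <- comp_assoc, Hf, Hg; reflexivity.
Qed.

Definition MCat (B : Ob T) : Category.
Proof.
  refine {| Ob := MOb B; Hom := @MHom B;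
            idm := fun x => exist _ (idm (projT1 x)) (m_id_pf x);
            comp := fun x y z f g => exist _ (proj1_sig f ;; proj1_sig g) (m_comp_pf f g) |}.
  - intros; apply sig_ext; apply comp_idl.
  - intros; apply sig_ext; apply comp_idr.
  - intros; apply sig_ext; apply comp_assoc.
Defined.

Definition Minus (B : Ob T) : Category := Op (MCat B).

Lemma cplus_pf (A B : Ob T) (c : Hom A B) (x y : PlusOb A) (f : PlusHom x y) :
  projT2 x ;; c = fmap t (proj1_sig f) ;; (projT2 y ;; c).
Proof. destruct f as [f Hf]; simpl; rewrite Hf, comp_assoc; reflexivity. Qed.

Definition cplus (A B : Ob T) (c : Hom A B) : Functor (Plus A) (Plus B).
Proof.
  refine (@Build_Functor (Plus A) (Plus B)
            (fun x : PlusOb A => (existT _ (projT1 x) (projT2 x ;; c) : PlusOb B))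
            (fun x y f => exist _ (proj1_sig f) (cplus_pf c f)) _ _).
  - intros; apply sig_ext; reflexivity.
  - intros; apply sig_ext; reflexivity.
Defined.

Lemma cminus_pf (A B : Ob T) (c : Hom A B) (x y : MOb B) (f : MHom x y) :
  (c ;; projT2 x) ;; fmap t (proj1_sig f) = c ;; projT2 y.
Proof. destruct f as [f Hf]; simpl; rewrite comp_assoc, Hf; reflexivity. Qed.

Definition cminusM (A B : Ob T) (c : Hom A B) : Functor (MCat B) (MCat A).
Proof.
  refine (@Build_Functor (MCat B) (MCat A)
            (fun x : MOb B => (existT _ (projT1 x) (c ;; projT2 x) : MOb A))
            (fun x y f => exist _ (proj1_sig f) (cminus_pf c f)) _ _).
  - intros; apply sig_ext; reflexivity.
  - intros; apply sig_ext; reflexivity.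
Defined.

Definition cminus (A B : Ob T) (c : Hom A B) : Functor (Minus B) (Minus A) :=
  OpF (cminusM c).

Definition JOb := {P : Ob D & {R : Ob D & Hom (t P) (t R)}}.
Definition jP (j : JOb) : Ob D := projT1 j.
Definition jR (j : JOb) : Ob D := projT1 (projT2 j).
Definition jc (j : JOb) : Hom (t (jP j)) (t (jR j)) := projT2 (projT2 j).

Definition JHom (j1 j2 : JOb) :=
  {p : (Hom (jP j1) (jP j2) * Hom (jR j2) (jR j1))%type
     | jc j1 = fmap t (fst p) ;; jc j2 ;; fmap t (snd p)}.

Lemma j_id_pf (j : JOb) :
  jc j = fmap t (fst (idm (jP j), idm (jR j))) ;; jc j ;; fmap t (snd (idm (jP j), idm (jR j))).
Proof. simpl; rewrite !fmap_id, comp_idl, comp_idr; reflexivity. Qed.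

Lemma j_comp_pf (j1 j2 j3 : JOb) (f : JHom j1 j2) (g : JHom j2 j3) :
  jc j1 = fmap t (fst (fst (proj1_sig f) ;; fst (proj1_sig g),
                        snd (proj1_sig g) ;; snd (proj1_sig f)))
          ;; jc j3
          ;; fmap t (snd (fst (proj1_sig f) ;; fst (proj1_sig g),
                           snd (proj1_sig g) ;; snd (proj1_sig f))).
Proof.
  destruct f as [[b1 g1] Hf], g as [[b2 g2] Hg]; simpl in *.
  rewrite Hf, Hg, !fmap_comp, !comp_assoc; reflexivity.
Qed.

Definition Jdg : Category.
Proof.
  refine {| Ob := JOb; Hom := JHom;
            idm := fun j => exist _ (idm (jP j), idm (jR j)) (j_id_pf j);
            comp := fun j1 j2 j3 f g =>
              exist _ (fst (proj1_sig f) ;; fst (proj1_sig g),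
                       snd (proj1_sig g) ;; snd (proj1_sig f)) (j_comp_pf f g) |}.
  - intros a b [[f g] H]; apply sig_ext; simpl; rewrite comp_idl, comp_idr; reflexivity.
  - intros a b [[f g] H]; apply sig_ext; simpl; rewrite comp_idl, comp_idr; reflexivity.
  - intros a b c d [[f1 f2] H1] [[g1 g2] H2] [[h1 h2] H3]; apply sig_ext; simpl;
      rewrite !comp_assoc; reflexivity.
Defined.

Definition DerOb (j : JOb) := {a : Hom (jP j) (jR j) | fmap t a = jc j}.

Lemma der_pf (j1 j2 : JOb) (p : JHom j1 j2) (a : DerOb j2) :
  fmap t (fst (proj1_sig p) ;; proj1_sig a ;; snd (proj1_sig p)) = jc j1.
Proof.
  destruct p as [[b g] Hp], a as [a Ha]; simpl.
  rewrite !fmap_comp, Ha, Hp; reflexivity.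
Qed.

Definition Der : Presheaf Jdg.
Proof.
  refine {| pobj := DerOb : Ob Jdg -> Type;
            pmap := fun j1 j2 p a =>
              exist _ (fst (proj1_sig p) ;; proj1_sig a ;; snd (proj1_sig p)) (der_pf p a) |}.
  - intros j [a Ha]; apply sig_ext; simpl; rewrite comp_idl, comp_idr; reflexivity.
  - intros j1 j2 j3 [[f1 f2] Hf] [[g1 g2] Hg] [a Ha]; apply sig_ext; simpl;
      rewrite !comp_assoc; reflexivity.
Defined.

Definition br_obj (B : Ob T) (z : Ob (Prod (Plus B) (Minus B))) : JOb :=
  existT _ (projT1 (fst z)) (existT _ (projT1 (snd z)) (projT2 (fst z) ;; projT2 (snd z))).

Lemma br_pf (B : Ob T) (z1 z2 : Ob (Prod (Plus B) (Minus B)))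
  (m : Hom z1 z2) :
  jc (br_obj z1) = fmap t (fst (proj1_sig (fst m), proj1_sig (snd m))) ;; jc (br_obj z2)
                   ;; fmap t (snd (proj1_sig (fst m), proj1_sig (snd m))).
Proof.
  destruct z1 as [[P1 c1] [R1 d1]], z2 as [[P2 c2] [R2 d2]].
  destruct m as [[b Hb] [g Hg]]; unfold br_obj, jc; simpl in *.
  rewrite Hb, <- Hg, !comp_assoc; reflexivity.
Qed.

Definition Bracket (B : Ob T) : Functor (Prod (Plus B) (Minus B)) Jdg.
Proof.
  refine (@Build_Functor (Prod (Plus B) (Minus B)) Jdg (@br_obj B)
            (fun z1 z2 m => exist _ (proj1_sig (fst m), proj1_sig (snd m)) (br_pf m)) _ _).
  - intros; apply sig_ext; reflexivity.
  - intros; apply sig_ext; reflexivity.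
Defined.

Definition BrL (B : Ob T) (y : Ob (Minus B)) : Functor (Plus B) Jdg.
Proof.
  refine (@Build_Functor (Plus B) Jdg (fun x => Bracket B (x, y))
            (fun x1 x2 f =>
              fmap (Bracket B) ((f, idm y) : @Hom (Prod (Plus B) (Minus B)) (x1, y) (x2, y))) _ _).
  - intros x; exact (fmap_id (Bracket B) (x, y)).
  - intros a b c f g.
    rewrite <- (fmap_comp (Bracket B)); f_equal; simpl; f_equal; symmetry;
    exact (@comp_idl (Minus B) y y (idm y)).
Defined.

Definition DerAt (B : Ob T) (y : Ob (Minus B)) : Presheaf (Plus B) := Pull (BrL y) Der.

Definition perp_act (B : Ob T) (y1 y2 : Ob (Minus B)) (g : Hom y1 y2) (x : Ob (Plus B)) :
  DerAt y2 x -> DerAt y1 x :=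
  pmap Der (fmap (Bracket B)
              ((idm x, g) : @Hom (Prod (Plus B) (Minus B)) (x, y1) (x, y2))).

Lemma perp_nat (B : Ob T) (phi : Presheaf (Plus B)) (y1 y2 : Ob (Minus B))
  (g : Hom y1 y2) (eta : NatTrans phi (DerAt y2)) :
  forall (a b : Ob (Plus B)) (f : Hom a b) (x : phi b),
    perp_act g (eta a (pmap phi f x)) = pmap (DerAt y1) f (perp_act g (eta b x)).
Proof.
  intros a b f x; unfold perp_act.
  rewrite (nt_nat eta); unfold DerAt, Pull, BrL; cbn [pmap fmap].
  rewrite <- !(pmap_comp Der). f_equal.
  etransitivity; [symmetry; apply (fmap_comp (Bracket B))|].
  etransitivity; [|apply (fmap_comp (Bracket B))].
  f_equal; cbn [comp Prod fst snd].
  rewrite comp_idl, comp_idr, comp_idl, comp_idr; reflexivity.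
Qed.

Definition perp_map (B : Ob T) (phi : Presheaf (Plus B)) (y1 y2 : Ob (Minus B))
  (g : Hom y1 y2) (eta : NatTrans phi (DerAt y2)) : NatTrans phi (DerAt y1) :=
  {| ntc := fun x a => perp_act g (eta x a); nt_nat := perp_nat g eta |}.

Definition Perp (B : Ob T) (phi : Presheaf (Plus B)) : Presheaf (Minus B).
Proof.
  refine {| pobj := fun y => NatTrans phi (DerAt y);
            pmap := fun y1 y2 g eta => perp_map g eta |}.
  - intros y eta; apply natt_ext; intros x a; cbn [ntc perp_map]; unfold perp_act.
    exact (eq_trans (f_equal (fun m => pmap Der m (eta x a)) (fmap_id (Bracket B) (x, y)))
                    (pmap_id Der _)).
  - intros y1 y2 y3 g1 g2 eta; apply natt_ext; intros x a; cbn [ntc perp_map];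
    unfold perp_act.
    rewrite <- (pmap_comp Der). f_equal.
    etransitivity; [|apply (fmap_comp (Bracket B))].
    f_equal; cbn [comp Prod fst snd]; rewrite comp_idl; reflexivity.
Defined.

End Refinement.

Arguments Plus {D T} t B.
Arguments Minus {D T} t B.
Arguments cplus {D T} t {A B} c.
Arguments cminus {D T} t {A B} c.
Arguments Perp {D T} t {B} phi.
Arguments Jdg {D T} t.
Arguments Der {D T} t.

(* The judgments [<c^+ x | y>_B] and [<x | c^- y>_A] differ only by the
   bracketing of [(e ; c) ; d], so [(c^-)^* phi^perp] at [y] is
   [Nat(phi, (c^+)^* Der(<- | y>_B))], which the adjunction
   [(c^+)_! -| (c^+)^*] turns into [Nat((c^+)_! phi, Der(<- | y>_B))].
   Both bijections are natural in [y], which acts only by postcomposition. *)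
From Stdlib Require Import FunctionalExtensionality
  PropExtensionality Relations ClassicalEpsilon.

Set Implicit Arguments.
Unset Strict Implicit.

Definition nt_vcomp (C : Category) (F G H : Presheaf C)
  (e1 : NatTrans F G) (e2 : NatTrans G H) : NatTrans F H.
Proof.
  refine {| ntc := fun a x => e2 a (e1 a x) |}.
  intros a b f x; rewrite (nt_nat e1), (nt_nat e2); reflexivity.
Defined.

Lemma psh_iso_of_natural_bijection (C : Category) (F G : Presheaf C)
  (eta : NatTrans F G) (theta : forall a, G a -> F a) :
  (forall a x, theta a (eta a x) = x) -> (forall a x, eta a (theta a x) = x) ->
  PshIso F G.
Proof.
  intros eta_theta theta_eta.
  assert (theta_nat : forall a b (f : Hom a b) (x : G b),
             theta a (pmap G f x) = pmap F f (theta b x)).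
  { intros a b f x.
    rewrite <- (theta_eta b x) at 1; rewrite <- (nt_nat eta); apply eta_theta. }
  exists eta, {| ntc := theta; nt_nat := theta_nat |}; split; assumption.
Qed.

Section LKanUniversal.
Variables (X Y : Category) (F : Functor X Y) (chi : Presheaf X).

Lemma ceq_equivalence (y : Ob Y) : equivalence _ (@ceq _ _ F chi y).
Proof.
  split; red; intros.
  - apply rst_refl.
  - eapply rst_trans; eassumption.
  - apply rst_sym; assumption.
Qed.

Definition coend_rep (y : Ob Y) (Q : Coend F chi y) : Elt F chi y :=
  proj1_sig (constructive_indefinite_description _ (proj2_sig Q)).

Lemma coend_repE (y : Ob Y) (Q : Coend F chi y) : proj1_sig Q = ceq (coend_rep Q).
Proof.
  unfold coend_rep; destruct constructive_indefinite_description; assumption.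
Qed.

Lemma coend_rep_in (y : Ob Y) (Q : Coend F chi y) : proj1_sig Q (coend_rep Q).
Proof. rewrite coend_repE; apply rst_refl. Qed.

Lemma coend_eq (y : Ob Y) (Q Q' : Coend F chi y) (s : Elt F chi y) :
  proj1_sig Q s -> proj1_sig Q' s -> Q = Q'.
Proof.
  destruct (ceq_equivalence y) as [_ ceq_trans ceq_sym].
  rewrite (coend_repE Q), (coend_repE Q'); intros Hs Hs'.
  apply sig_ext; rewrite (coend_repE Q), (coend_repE Q').
  assert (E : ceq (coend_rep Q) (coend_rep Q')) by eauto.
  apply functional_extensionality; intro w; apply propositional_extensionality.
  split; eauto.
Qed.

Definition lkan_in (x : Ob X) (a : chi x) : LKan F chi (F x) :=
  exist _ (ceq (existT _ x (idm (F x), a))) (ex_intro _ _ eq_refl).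

Lemma lkan_in_nat (x1 x2 : Ob X) (u : Hom x1 x2) (a : chi x2) :
  lkan_in (pmap chi u a) = pmap (LKan F chi) (fmap F u) (lkan_in a).
Proof.
  apply (@coend_eq _ _ _ (existT _ x1 (idm (F x1), pmap chi u a))); [apply rst_refl|].
  exists (existT _ x2 (idm (F x2), a)); split; [apply rst_refl|].
  unfold emap; cbn; rewrite comp_idr, <- (comp_idl (fmap F u)).
  apply rst_sym, rst_step; constructor.
Qed.

Lemma lkan_generated (y : Ob Y) (Q : LKan F chi y) (x : Ob X)
  (f : Hom y (F x)) (a : chi x) :
  proj1_sig Q (existT _ x (f, a)) -> Q = pmap (LKan F chi) f (lkan_in a).
Proof.
  intro HQ; apply (coend_eq HQ).
  exists (existT _ x (idm (F x), a)); split; [apply rst_refl|].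
  unfold emap; cbn; rewrite comp_idr; apply rst_refl.
Qed.

Section Descent.
Variables (G : Presheaf Y) (theta : NatTrans chi (Pull F G)).

Definition elt_eval (y : Ob Y) (s : Elt F chi y) : G y :=
  pmap G (fst (projT2 s)) (theta (projT1 s) (snd (projT2 s))).

Lemma elt_eval_resp (y : Ob Y) (s1 s2 : Elt F chi y) :
  ceq s1 s2 -> elt_eval s1 = elt_eval s2.
Proof.
  induction 1 as [s1 s2 [x x' u f a]| | |]; try congruence.
  unfold elt_eval; cbn; rewrite (nt_nat theta); cbn.
  symmetry; apply pmap_comp.
Qed.

Definition lkan_desc_map (y : Ob Y) (Q : LKan F chi y) : G y :=
  elt_eval (coend_rep Q).

Lemma lkan_desc_mapE (y : Ob Y) (Q : LKan F chi y) (s : Elt F chi y) :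
  proj1_sig Q s -> lkan_desc_map Q = elt_eval s.
Proof.
  rewrite coend_repE; apply elt_eval_resp.
Qed.

Lemma lkan_desc_nat (y' y : Ob Y) (g : Hom y' y) (Q : LKan F chi y) :
  lkan_desc_map (pmap (LKan F chi) g Q) = pmap G g (lkan_desc_map Q).
Proof.
  rewrite (@lkan_desc_mapE _ _ (emap g (coend_rep Q))).
  - unfold elt_eval, emap; cbn; apply pmap_comp.
  - exists (coend_rep Q); split; [apply coend_rep_in | apply rst_refl].
Qed.

Definition lkan_desc : NatTrans (LKan F chi) G :=
  {| ntc := lkan_desc_map; nt_nat := lkan_desc_nat |}.

Lemma lkan_desc_in (x : Ob X) (a : chi x) : lkan_desc (F x) (lkan_in a) = theta x a.
Proof.
  cbn; rewrite (@lkan_desc_mapE _ _ (existT _ x (idm (F x), a))) by apply rst_refl.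
  apply pmap_id.
Qed.

End Descent.

Definition lkan_restr (G : Presheaf Y) (eta : NatTrans (LKan F chi) G) :
  NatTrans chi (Pull F G).
Proof.
  refine {| ntc := (fun x a => eta (F x) (lkan_in a)) : forall x, chi x -> Pull F G x |}.
  intros x1 x2 u a; cbn; rewrite lkan_in_nat; apply (nt_nat eta).
Defined.

Lemma lkan_desc_restr (G : Presheaf Y) (eta : NatTrans (LKan F chi) G)
  (y : Ob Y) (Q : LKan F chi y) : lkan_desc (lkan_restr eta) y Q = eta y Q.
Proof.
  cbn; unfold lkan_desc_map, elt_eval.
  pose proof (coend_rep_in Q) as HQ.
  destruct (coend_rep Q) as [x [f a]]; cbn.
  rewrite <- (nt_nat eta), <- (lkan_generated HQ); reflexivity.
Qed.

End LKanUniversal.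

Section Transpose.
Variables (D T : Category) (t : Functor D T) (A B : Ob T) (c : Hom A B)
  (phi : Presheaf (Plus t A)).

Lemma der_reassoc_pf (y : Ob (Minus t B)) (x : Ob (Plus t A))
  (a : DerAt (cminus t c y) x) :
  fmap t (proj1_sig a) = jc (br_obj (cplus t c x, y)).
Proof. rewrite (proj2_sig a); cbn; symmetry; apply comp_assoc. Qed.

Lemma der_unassoc_pf (y : Ob (Minus t B)) (x : Ob (Plus t A))
  (a : DerAt y (cplus t c x)) :
  fmap t (proj1_sig a) = jc (br_obj (x, cminus t c y)).
Proof. rewrite (proj2_sig a); cbn; apply comp_assoc. Qed.

Definition der_reassoc (y : Ob (Minus t B)) :
  NatTrans (DerAt (cminus t c y)) (Pull (cplus t c) (DerAt y)).
Proof.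
  refine {| ntc := (fun x (a : DerAt (cminus t c y) x) =>
                      exist _ (proj1_sig a) (der_reassoc_pf a))
               : forall x, _ -> Pull (cplus t c) (DerAt y) x |}.
  intros; apply sig_ext; reflexivity.
Defined.

Definition der_unassoc (y : Ob (Minus t B)) :
  NatTrans (Pull (cplus t c) (DerAt y)) (DerAt (cminus t c y)).
Proof.
  refine {| ntc := (fun x (a : Pull (cplus t c) (DerAt y) x) =>
                      exist _ (proj1_sig a) (der_unassoc_pf a))
               : forall x, _ -> DerAt (cminus t c y) x |}.
  intros; apply sig_ext; reflexivity.
Defined.

Definition perp_transpose (y : Ob (Minus t B))
  (th : Pull (cminus t c) (Perp t phi) y) : Perp t (LKan (cplus t c) phi) y :=
  lkan_desc (nt_vcomp th (der_reassoc y)).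

Definition perp_untranspose (y : Ob (Minus t B))
  (Th : Perp t (LKan (cplus t c) phi) y) : Pull (cminus t c) (Perp t phi) y :=
  nt_vcomp (lkan_restr Th) (der_unassoc y).

Lemma perp_transpose_nat (y1 y2 : Ob (Minus t B)) (g : Hom y1 y2)
  (th : Pull (cminus t c) (Perp t phi) y2) :
  perp_transpose (pmap (Pull (cminus t c) (Perp t phi)) g th)
  = pmap (Perp t (LKan (cplus t c) phi)) g (perp_transpose th).
Proof.
  apply natt_ext; intros z Q; apply sig_ext; cbn.
  rewrite !comp_idl, !comp_idr, !comp_assoc; reflexivity.
Qed.

Definition perp_transposeN :
  NatTrans (Pull (cminus t c) (Perp t phi)) (Perp t (LKan (cplus t c) phi)) :=
  {| ntc := perp_transpose; nt_nat := perp_transpose_nat |}.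

Lemma perp_untransposeK (y : Ob (Minus t B)) (th : Pull (cminus t c) (Perp t phi) y) :
  perp_untranspose (perp_transpose th) = th.
Proof.
  apply natt_ext; intros x a; apply sig_ext; cbn [perp_untranspose nt_vcomp ntc].
  unfold perp_transpose; cbn [lkan_restr ntc]; rewrite lkan_desc_in; reflexivity.
Qed.

Lemma perp_transposeK (y : Ob (Minus t B)) (Th : Perp t (LKan (cplus t c) phi) y) :
  perp_transpose (perp_untranspose Th) = Th.
Proof.
  apply natt_ext; intros z Q.
  transitivity (lkan_desc (lkan_restr Th) z Q); [|apply lkan_desc_restr].
  unfold perp_transpose; do 2 f_equal; apply natt_ext; intros x a; apply sig_ext; reflexivity.
Qed.

End Transpose.

Theorem lemma4p11 (D T : Category) (t : Functor D T) (A B : Ob T) (c : Hom A B)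
  (phi : Presheaf (Plus t A)) :
  PshIso (Pull (cminus t c) (Perp t phi)) (Perp t (LKan (cplus t c) phi)).
Proof.
  apply (@psh_iso_of_natural_bijection _ _ _
           (perp_transposeN c phi) (@perp_untranspose _ _ t _ _ c phi)).
  - apply perp_untransposeK.
  - apply perp_transposeK.
Qed.
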